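(* Fix a bounded subset $E\subset\mathbb C$. There exists $\ell=\ell(E)\ge1$ such that for all sufficiently small $\epsilon>0$, $$a_tkmn_z\in H_{\ell\epsilon}\,m\,a_t\,n_z\,U_{\ell\epsilon}$$ holds for any $m\in M$, $t>0$, $z\in E$ and $k\in K_\epsilon$.
   Context: $G=\mathrm{PSL}_2(\mathbb C)$, $K=\mathrm{PSU}(2)$, $a_t=\mathrm{diag}(e^{t/2},e^{-t/2})$, $M=\{\mathrm{diag}(e^{i\theta},e^{-i\theta})\}$, $n_z=\begin{pmatrix}1&z\\0&1\end{pmatrix}$, $H$ the stabilizer in $G$ of the unit circle centered at $0$. With a fixed left-invariant metric on $G$, $U_\epsilon$ is the $\epsilon$-ball around $e$, and for $W\subset G$, $W_\epsilon=W\cap U_\epsilon$ (so $K_\epsilon=K\cap U_\epsilon$, $H_{\ell\epsilon}=H\cap U_{\ell\epsilon}$). *)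

From HB Require Import structures.
From mathcomp Require Import all_boot all_order all_algebra.
From mathcomp Require Import all_classical all_reals.
From mathcomp Require Import all_analysis.
From mathcomp.real_closed Require Import complex.
Set Implicit Arguments. Unset Strict Implicit. Unset Printing Implicit Defensive.
Import Order.TTheory GRing.Theory Num.Theory.
Local Open Scope ring_scope.
Local Open Scope classical_set_scope.
Local Open Scope complex_scope.

(* Elements of G = PSL_2(C) are represented by matrices of SL_2(C);
   two matrices represent the same element iff they differ by a sign. *)
Section PSL2.
Variable R : realType.
Notation C := R[i].
Notation mx := 'M[C]_2.

Definition SL2 (A : mx) : Prop := \det A = 1.

Definition psl_eq (A B : mx) : Prop := A = B \/ A = - B.

Definition mxn (A : mx) : R := \sum_(i < 2) \sum_(j < 2) Normc.normc (A i j).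

(* distance of (the class of) A to the identity in the matrix chart *)
Definition chart_dist (A : mx) : R := Num.min (mxn (A - 1)) (mxn (A + 1)).

Definition a_ (t : R) : mx := \matrix_(i < 2, j < 2)
  (if i == j then (if i == 0 then (expR (t / 2))%:C else (expR (- (t / 2)))%:C)
   else 0).

Definition expi (th : R) : C := (cos th +i* sin th).

Definition m_ (th : R) : mx := \matrix_(i < 2, j < 2)
  (if i == j then (if i == 0 then expi th else expi (- th)) else 0).

Definition Mset : set mx := [set m | exists th : R, psl_eq m (m_ th)].

Definition n_ (z : C) : mx := \matrix_(i < 2, j < 2)
  (if i == j then 1 else if i == 0 then z else 0).

Definition Kset : set mx :=
  [set A | SL2 A /\ A *m (map_mx Num.conj A)^T = 1].

Definition mob (g : mx) (z : C) : C :=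
  (g 0 0 * z + g 0 1) / (g 1 0 * z + g 1 1).

Definition unit_circle : set C := [set z | Normc.normc z = 1].

(* H = stabilizer in G of the unit circle centered at 0: g maps the unit
   circle (avoiding the pole, i.e. no point goes to infinity) onto itself. *)
Definition Hset : set mx :=
  [set g | SL2 g /\
     (forall z, unit_circle z -> g 1 0 * z + g 1 1 != 0 /\ unit_circle (mob g z)) /\
     (forall w, unit_circle w -> exists2 z, unit_circle z & mob g z = w)].

(* A left-invariant metric on G = PSL_2(C), given as a function on
   representatives, which is locally bi-Lipschitz equivalent near the
   identity to the matrix chart (as every left-invariant Riemannian metric is). *)
Definition left_inv_metric (d : mx -> mx -> R) : Prop :=
  (* well defined on PSL_2 *)
  (forall A B, SL2 A -> SL2 B -> d (- A) B = d A B /\ d A (- B) = d A B) /\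
  (forall A, SL2 A -> d A A = 0) /\
  (forall A B, SL2 A -> SL2 B -> d A B = 0 -> psl_eq A B) /\
  (forall A B, SL2 A -> SL2 B -> d A B = d B A) /\
  (forall X Y Z, SL2 X -> SL2 Y -> SL2 Z -> d X Z <= d X Y + d Y Z) /\
  (forall g A B, SL2 g -> SL2 A -> SL2 B -> d (g *m A) (g *m B) = d A B) /\
  (exists c r : R, 0 < c /\ 0 < r /\
     (forall A, SL2 A -> (d 1 A < r \/ chart_dist A < r) ->
        (c * chart_dist A <= d 1 A /\ c * d 1 A <= chart_dist A))).

Definition U_ (d : mx -> mx -> R) (eps : R) : set mx :=
  [set A | SL2 A /\ d 1 A < eps].

Definition sub_ (d : mx -> mx -> R) (W : set mx) (eps : R) : set mx :=
  W `&` U_ d eps.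

Definition bounded_set (E : set C) : Prop :=
  exists B : R, forall z, E z -> Normc.normc z <= B.

End PSL2.

From HB Require Import structures.
From mathcomp Require Import all_boot all_order all_algebra.
From mathcomp Require Import all_classical all_reals.
From mathcomp Require trigo.
From mathcomp.real_closed Require Import complex.
From mathcomp Require Import ring lra.
Set Implicit Arguments. Unset Strict Implicit. Unset Printing Implicit Defensive.
Import Order.TTheory GRing.Theory Num.Theory.
Local Open Scope ring_scope.
Local Open Scope classical_set_scope.

(* One may take h = e: since m commutes with a_t,
     a_t k m n_z = m a_t n_z ((m n_z)^-1 k (m n_z)).
   For z in a bounded set and m in M the matrices m n_z and their inverses
   have bounded norm, so conjugating by them distorts the distance to +-1 in
   the matrix chart by a bounded factor; near e this chart distance is
   comparable to d, which gives d(e, u) <= l eps for the conjugate u of k. *)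

Section TwoByTwo.
Variable R : realType.
Notation C := R[i].
Notation mx := 'M[C]_2.

Lemma sum_ord2 (V : nmodType) (F : 'I_2 -> V) : \sum_(i < 2) F i = F 0 + F 1.
Proof. by rewrite big_ord_recl big_ord1; congr (F _ + F _); apply: val_inj. Qed.

Lemma ord2_cases (i : 'I_2) : i = 0 \/ i = 1.
Proof. by case: i => [[|[|n]]] Hi; [left; apply: val_inj | right; apply: val_inj |]. Qed.

Lemma mulmx2E (A B : mx) i j : (A *m B) i j = A i 0 * B 0 j + A i 1 * B 1 j.
Proof. by rewrite mxE sum_ord2. Qed.

Lemma normc_ge0 (x : C) : 0 <= Normc.normc x.
Proof. by case: x => a b; apply: sqrtr_ge0. Qed.

Lemma mxnE (A : mx) : mxn A = Normc.normc (A 0 0) + Normc.normc (A 0 1)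
  + Normc.normc (A 1 0) + Normc.normc (A 1 1).
Proof. by rewrite /mxn !sum_ord2 addrA. Qed.

Lemma mxn_ge0 (A : mx) : 0 <= mxn A.
Proof. by rewrite mxnE; do !apply: addr_ge0; apply: normc_ge0. Qed.

Lemma mxnN (A : mx) : mxn (- A) = mxn A.
Proof. by rewrite !mxnE !mxE !normcN. Qed.

Lemma mxn_mul (A B : mx) : mxn (A *m B) <= mxn A * mxn B.
Proof.
have normc_dot (a b c d : C) : Normc.normc (a * b + c * d) <=
    Normc.normc a * Normc.normc b + Normc.normc c * Normc.normc d.
  by rewrite -!Normc.normcM; apply: le_normcD.
rewrite !mxnE !mulmx2E.
apply: le_trans; first by do 3 ?apply: lerD; apply: normc_dot.
have := normc_ge0 (A 0 0); have := normc_ge0 (A 0 1);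
have := normc_ge0 (A 1 0); have := normc_ge0 (A 1 1);
have := normc_ge0 (B 0 0); have := normc_ge0 (B 0 1);
have := normc_ge0 (B 1 0); have := normc_ge0 (B 1 1).
nra.
Qed.

Lemma mxn_conj (Q X P : mx) : mxn (Q *m X *m P) <= mxn Q * mxn P * mxn X.
Proof.
apply: le_trans (mxn_mul _ _) _.
apply: le_trans (ler_wpM2r (mxn_ge0 _) (mxn_mul _ _)) _.
by rewrite mulrAC.
Qed.

Lemma le_min_mulr (F : realDomainType) (K a b a' b' : F) :
  a' <= K * a -> b' <= K * b -> Num.min a' b' <= K * Num.min a b.
Proof.
by move=> le_a le_b; case: (leP a b) => _; rewrite ge_min ?le_a ?le_b ?orbT.
Qed.

Lemma chart_dist_ge0 (X : mx) : 0 <= chart_dist X.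
Proof. by rewrite /chart_dist le_min !mxn_ge0. Qed.

Lemma chart_dist_conj (Q X P : mx) : Q *m P = 1 ->
  chart_dist (Q *m X *m P) <= mxn Q * mxn P * chart_dist X.
Proof.
rewrite /chart_dist => QP.
have -> : Q *m X *m P - 1 = Q *m (X - 1) *m P by rewrite mulmxBr mulmxBl mulmx1 QP.
have -> : Q *m X *m P + 1 = Q *m (X + 1) *m P by rewrite mulmxDr mulmxDl mulmx1 QP.
by apply: le_min_mulr; apply: mxn_conj.
Qed.

Lemma SL2_conj (Q X P : mx) : Q *m P = 1 -> SL2 X -> SL2 (Q *m X *m P).
Proof.
rewrite /SL2 => QP detX.
by rewrite !det_mulmx mulrAC -det_mulmx QP det1 detX mul1r.
Qed.

Lemma mulmx_factor_conj (a k g g' n n' : mx) :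
  g *m g' = 1 -> n *m n' = 1 -> g *m a = a *m g ->
  a *m k *m g *m n = g *m a *m n *m (n' *m g' *m k *m (g *m n)).
Proof.
move=> gg' nn' ga.
by rewrite !mulmxA -(mulmxA _ n) nn' mulmx1 ga -(mulmxA a g) gg' mulmx1.
Qed.

Lemma expi_mulN (th : R) : expi th * expi (- th) = 1.
Proof.
rewrite /expi trigo.cosN trigo.sinN; apply/eqP; rewrite eq_complex /=.
by rewrite !mulrN opprK -!expr2 trigo.cos2Dsin2 [_ * trigo.cos _]mulrC addNr !eqxx.
Qed.

Lemma mxn_m (th : R) : mxn (m_ th) = 2.
Proof. rewrite mxnE !mxE /= !trigo.cos2Dsin2 sqrtr1 expr0n /= addr0 sqrtr0; lra. Qed.

Lemma mxn_n (z : C) : mxn (n_ z) = 2 + Normc.normc z.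
Proof. rewrite mxnE !mxE /= expr0n /= !addr0 expr1n sqrtr1 sqrtr0; lra. Qed.

Lemma mulmx_mN (th : R) : m_ th *m m_ (- th) = 1.
Proof.
apply/matrixP => i j; rewrite mulmx2E !mxE.
case: (ord2_cases i) => ->; case: (ord2_cases j) => -> /=;
  rewrite ?mulr0 ?mul0r ?addr0 ?add0r //.
- exact: expi_mulN.
- by rewrite opprK mulrC expi_mulN.
Qed.

Lemma mulmx_nN (z : C) : n_ z *m n_ (- z) = 1.
Proof.
apply/matrixP => i j; rewrite mulmx2E !mxE.
case: (ord2_cases i) => ->; case: (ord2_cases j) => -> /=;
  rewrite ?mulr0 ?mul0r ?addr0 ?add0r ?mulr1 ?mul1r //.
exact: addNr.
Qed.

Lemma m_a_comm (th t : R) : m_ th *m a_ t = a_ t *m m_ th.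
Proof.
apply/matrixP => i j; rewrite !mulmx2E !mxE.
by case: (ord2_cases i) => ->; case: (ord2_cases j) => -> /=;
  rewrite ?mulr0 ?mul0r ?addr0 ?add0r // mulrC.
Qed.

Lemma Mset_mxn (m : mx) : Mset m -> mxn m = 2.
Proof. by case=> th [|] ->; rewrite ?mxnN mxn_m. Qed.

Lemma Mset_inv (m : mx) : Mset m -> exists2 m', Mset m' & m *m m' = 1.
Proof.
case=> th [|] ->.
- by exists (m_ (- th)); [exists (- th); left | exact: mulmx_mN].
- exists (- m_ (- th)); first by exists (- th); right.
  by rewrite mulmxN mulNmx opprK mulmx_mN.
Qed.

Lemma Mset_a_comm (m : mx) (t : R) : Mset m -> m *m a_ t = a_ t *m m.
Proof. by case=> th [|] ->; rewrite ?mulNmx ?mulmxN m_a_comm. Qed.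

Lemma Mset_n_conj_le (m m' : mx) (z : C) (B : R) :
  Mset m -> Mset m' -> Normc.normc z <= B ->
  mxn (n_ (- z) *m m') * mxn (m *m n_ z) <= (2 * (2 + B)) ^+ 2.
Proof.
move=> Mm Mm' zB.
have mxnQ : mxn (n_ (- z) *m m') <= 2 * (2 + B).
  apply: le_trans (mxn_mul _ _) _.
  by rewrite mxn_n Mset_mxn // normcN mulrC ler_pM2l // lerD2l.
have mxnP : mxn (m *m n_ z) <= 2 * (2 + B).
  by apply: le_trans (mxn_mul _ _) _; rewrite mxn_n Mset_mxn // ler_pM2l // lerD2l.
by rewrite expr2 ler_pM // mxn_ge0.
Qed.

Lemma Hset1 : Hset (1 : mx).
Proof.
have mob1 (w : C) : mob 1 w = w.
  by rewrite /mob !mxE /= mul0r mul1r add0r addr0 divr1.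
split; first by rewrite /SL2 det1.
split=> w uw; last by exists w; rewrite ?mob1.
by rewrite !mxE /= mul0r add0r oner_neq0 mob1.
Qed.

Section ChartComparison.
Variables (d : mx -> mx -> R) (c r : R).
Hypothesis c_gt0 : 0 < c.
Hypothesis chart_cmp : forall A, SL2 A -> (d 1 A < r \/ chart_dist A < r) ->
  c * chart_dist A <= d 1 A /\ c * d 1 A <= chart_dist A.

Lemma dist1_conj_le (Q k P : mx) (K eps : R) :
  Q *m P = 1 -> mxn Q * mxn P <= K -> SL2 k -> d 1 k < eps -> eps < r ->
  K * eps < c * r -> c ^+ 2 * d 1 (Q *m k *m P) <= K * eps.
Proof.
move=> QP QP_le SLk dk_lt eps_lt_r Keps_lt.
have [chart_k _] := chart_cmp SLk (or_introl (lt_trans dk_lt eps_lt_r)).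
have c_chart_u : c * chart_dist (Q *m k *m P) <= K * eps.
  apply: le_trans (ler_wpM2l (ltW c_gt0) (chart_dist_conj k QP)) _.
  rewrite mulrCA; apply: ler_pM => //.
  - by rewrite mulr_ge0 ?mxn_ge0.
  - by rewrite mulr_ge0 ?chart_dist_ge0 ?ltW.
  - exact: le_trans chart_k (ltW dk_lt).
have chart_u_lt : chart_dist (Q *m k *m P) < r.
  by rewrite -(ltr_pM2l c_gt0); apply: le_lt_trans Keps_lt.
have [_ d_u] := chart_cmp (SL2_conj QP SLk) (or_intror chart_u_lt).
apply: le_trans c_chart_u.
by rewrite expr2 -mulrA ler_wpM2l // ltW.
Qed.

End ChartComparison.

End TwoByTwo.

Theorem proposition4p4 (R : realType) (d : 'M[R[i]]_2 -> 'M[R[i]]_2 -> R)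
  (hd : left_inv_metric d) (E : set R[i]) (hE : bounded_set E) :
  exists2 l : R, 1 <= l &
  exists2 eps0 : R, 0 < eps0 &
  forall eps : R, 0 < eps -> eps < eps0 ->
  forall (m : 'M[R[i]]_2) (t : R) (z : R[i]) (k : 'M[R[i]]_2),
    Mset m -> 0 < t -> E z -> sub_ d (@Kset R) eps k ->
    exists h u : 'M[R[i]]_2,
      [/\ sub_ d (@Hset R) (l * eps) h, U_ d (l * eps) u &
          psl_eq (a_ t *m k *m m *m n_ z) (h *m m *m a_ t *m n_ z *m u)].
Proof.
move: hd => [_ [d_refl [_ [_ [_ [_ [c [r [c_gt0 [r_gt0 chart_cmp]]]]]]]]]].
case: hE => B E_le.
pose K0 : R := (2 * (2 + `|B|)) ^+ 2.
have K0_gt0 : 0 < K0 by rewrite exprn_gt0 // mulr_gt0 // ltr_wpDr.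
have c2_gt0 : 0 < c ^+ 2 by rewrite exprn_gt0.
exists (1 + K0 / c ^+ 2); first by rewrite lerDl ltW // divr_gt0.
exists (Num.min r (r * c / K0)); first by rewrite lt_min r_gt0 /= divr_gt0 // mulr_gt0.
move=> eps eps_gt0; rewrite lt_min ltr_pdivlMr // => /andP[eps_r eps_rc].
move=> m t z k Mm _ Ez [[SLk _] [_ dk_lt]].
have [m' Mm' mm'] := Mset_inv Mm.
pose Q := n_ (- z) *m m'; pose P := m *m n_ z.
have QP : Q *m P = 1.
  by rewrite /Q /P mulmxA -(mulmxA _ m') (mulmx1C mm') mulmx1 mulmx1C // mulmx_nN.
have K_le : mxn Q * mxn P <= K0.
  exact: Mset_n_conj_le Mm Mm' (le_trans (E_le _ Ez) (ler_norm _)).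
exists 1, (Q *m k *m P); split.
- have SL1 : SL2 (1 : 'M[R[i]]_2) by rewrite /SL2 det1.
  by split; [exact: Hset1 | split; rewrite ?d_refl ?mulr_gt0 ?addr_gt0 ?divr_gt0].
- split; first exact: SL2_conj.
  have Keps_lt : K0 * eps < c * r by rewrite mulrC [c * r]mulrC.
  have := dist1_conj_le c_gt0 chart_cmp QP K_le SLk dk_lt eps_r Keps_lt.
  by move=> c2_du; rewrite mulrDl mul1r ltr_pwDl // mulrAC ler_pdivlMr // mulrC.
- left; rewrite mul1mx; exact: mulmx_factor_conj (mulmx_nN z) (Mset_a_comm t Mm).
Qed.
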